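(* In the setting of the context, for every choice of keys $k,k'$ and permutation $\sigma$, the original ciphertext $M_f^{(0)}$ and the anamorphic ciphertext $M_f^{(1)}$ are computationally indistinguishable: for every quantum circuit $C$ with a single-bit classical output, \[ \big|\Pr[C(M_f^{(0)})=1]-\Pr[C(M_f^{(1)})=1]\big|<\varepsilon . \]
   Context: Let $d_1\ge d_2\ge1$, $\mathcal H_M=(\mathbb C^2)^{\otimes d_1}$, $\mathcal H_{M_c}=(\mathbb C^2)^{\otimes d_2}$, and $U_k=\bigotimes_{j}X^{k_{2j-1}}Z^{k_{2j}}$ (Pauli $X,Z$) for bit strings $k$. $M_o$ is a strictly positive definite density matrix on $\mathcal H_M$, $M_c$ a density matrix on $\mathcal H_{M_c}$; $M_o'=U_kM_oU_k^\dagger$ ($k\in\{0,1\}^{2d_1}$), $M_c'=U_{k'}M_cU_{k'}^\dagger$ ($k'\in\{0,1\}^{2d_2}$), $V|\psi\rangle=|\psi\rangle\otimes|0\rangle^{\otimes(d_1-d_2)}$, $M_c''=VM_c'V^\dagger$. For $\eta\in\mathbb Z^+$, on $\mathbb C^2\otimes\mathcal H_M$ (blocks w.r.t. the first qubit), $M_a^{(0)}=\begin{pmatrix}\frac12M_o'&0\\0&\frac12M_o'\end{pmatrix}$, $M_a^{(1)}=\begin{pmatrix}\frac12M_o'&\frac1\eta M_c''\\\frac1\eta(M_c'')^\dagger&\frac12M_o'\end{pmatrix}$, $M_f^{(b)}=U_\sigma M_a^{(b)}U_\sigma^\dagger$ with $U_\sigma$ a $2^{d_1+1}\times2^{d_1+1}$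 permutation matrix. Standing assumption of the construction: for a given threshold $\varepsilon>0$ (written $\mathsf{negl}(\lambda)$), $\eta$ satisfies $1/\eta<\varepsilon$ and $\frac1{\eta^2}\|M_c''(M_o')^{-1}M_c''\|\le\frac14\lambda_{\min}(M_o')$ (operator norm). *)

From HB Require Import structures.
From mathcomp Require Import all_boot all_order all_algebra.
From mathcomp Require Import fingroup perm sesquilinear spectral.
From mathcomp Require Import complex mxtens.
From mathcomp Require Import reals.

Set Implicit Arguments.
Unset Strict Implicit.
Unset Printing Implicit Defensive.

Import Order.TTheory GRing.Theory Num.Theory.
Local Open Scope ring_scope.
Local Open Scope sesquilinear_scope.

Section QDefs.
Variable R : realType.
Local Notation C := (R[i]).

Definition adjmx m n (A : 'M[C]_(m, n)) : 'M[C]_(n, m) := A ^t*.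

Definition hermitian n (A : 'M[C]_n) : Prop := adjmx A = A.

Definition psdmx n (A : 'M[C]_n) : Prop :=
  hermitian A /\ forall v : 'cV[C]_n, 0 <= (adjmx v *m A *m v) 0 0.

Definition pdmx n (A : 'M[C]_n) : Prop :=
  hermitian A /\ forall v : 'cV[C]_n, v != 0 -> 0 < (adjmx v *m A *m v) 0 0.

Definition density n (A : 'M[C]_n) : Prop := psdmx A /\ \tr A = 1.

Definition vnorm n (v : 'cV[C]_n) : C := sqrtC ((adjmx v *m v) 0 0).

Definition is_opnorm m n (A : 'M[C]_(m, n)) (c : C) : Prop :=
  (forall v : 'cV[C]_n, vnorm (A *m v) <= c * vnorm v) /\
  (forall c' : C, (forall v : 'cV[C]_n, vnorm (A *m v) <= c' * vnorm v) -> c <= c').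

Definition is_lambda_min n (A : 'M[C]_n) (l : C) : Prop :=
  eigenvalue A l /\ (forall m, eigenvalue A m -> l <= m).

(* bit of qubit j (0-indexed, qubit 0 = most significant) of basis index x *)
Definition qbit (d : nat) (x : nat) (j : 'I_d) : bool := odd (x %/ 2 ^ (d - j.+1)).

(* U_k = (x)_j X^{k_{2j-1}} Z^{k_{2j}}; the key k in {0,1}^{2d} is given as
   k j = (k_{2j-1}, k_{2j}) for the j-th qubit.
   U_k |x> = (-1)^{sum_j k_{2j} x_j} |x xor (k_{2j-1})_j>. *)
Definition pauliU (d : nat) (k : 'I_d -> bool * bool) : 'M[C]_(2 ^ d) :=
  \matrix_(i, x)
    if [forall j : 'I_d, qbit i j == (qbit x j (+) (k j).1)]
    then (-1) ^+ (\sum_(j < d) ((k j).2 && qbit x j : nat))%N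
    else 0.

(* V |psi> = |psi> (x) |0>^{(d1-d2)} *)
Definition Vemb (d1 d2 : nat) : 'M[C]_(2 ^ d1, 2 ^ d2) :=
  \matrix_(i, j) ((i : nat) == (j * 2 ^ (d1 - d2))%N)%:R.

Definition Mo' d1 (k : 'I_d1 -> bool * bool) (Mo : 'M[C]_(2 ^ d1)) :=
  pauliU k *m Mo *m adjmx (pauliU k).

Definition Mc'' d1 d2 (k' : 'I_d2 -> bool * bool) (Mc : 'M[C]_(2 ^ d2)) :
  'M[C]_(2 ^ d1) :=
  Vemb d1 d2 *m (pauliU k' *m Mc *m adjmx (pauliU k')) *m adjmx (Vemb d1 d2).

(* blocks w.r.t. the first qubit *)
Definition Ma (b : bool) d1 (eta : nat) (Mop Mcpp : 'M[C]_(2 ^ d1)) :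
  'M[C]_(2 ^ d1 + 2 ^ d1) :=
  block_mx ((2%:R)^-1 *: Mop) (if b then (eta%:R)^-1 *: Mcpp else 0)
           (if b then (eta%:R)^-1 *: adjmx Mcpp else 0) ((2%:R)^-1 *: Mop).

Definition Mf (b : bool) d1 (s : 'S_(2 ^ d1 + 2 ^ d1)) (eta : nat)
  (Mop Mcpp : 'M[C]_(2 ^ d1)) : 'M[C]_(2 ^ d1 + 2 ^ d1) :=
  perm_mx s *m Ma b eta Mop Mcpp *m adjmx (perm_mx s).

(* Quantum circuit with single-bit classical output, on an n-dim input and
   a ancilla qubits initialized to |0...0>: a unitary U on the joint system,
   followed by a computational-basis measurement of the first qubit. *)
Lemma pow2_gt0 (a : nat) : (0 < 2 ^ a)%N.
Proof. by rewrite expn_gt0. Qed.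

Definition anc0 (a : nat) : 'I_(2 ^ a) := Ordinal (pow2_gt0 a).

Definition anc_state (a : nat) : 'M[C]_(2 ^ a) := delta_mx (anc0 a) (anc0 a).

(* projector onto |1> for the first qubit of a 2m-dimensional register *)
Definition proj1_first m : 'M[C]_(m + m) := block_mx 0 0 0 1%:M.

Definition accept_prob m (a : nat) (U : 'M[C]_((m + m) * 2 ^ a))
  (rho : 'M[C]_(m + m)) : C :=
  \tr (tensmx (proj1_first m) (1%:M : 'M[C]_(2 ^ a)) *m
       (U *m tensmx rho (anc_state a) *m adjmx U)).

End QDefs.

From Pilot Require Import Defs.
From HB Require Import structures.
From mathcomp Require Import all_boot all_order all_algebra.
From mathcomp Require Import fingroup perm sesquilinear spectral.
From mathcomp Require Import complex mxtens.
From mathcomp Require Import reals.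
From mathcomp Require Import zify.

(** The two ciphertexts differ only in the off-diagonal blocks [(1/η) M_c''].
   As [M_c''] is Hermitian, [[0, N], [N, 0]] = (L₊ N L₊† - L₋ N L₋†) / 2 with
   [L± = (1, ±1)ᵀ], so after conjugation by the permutation the difference
   [M_f^(0) - M_f^(1)] is [P - Q] with [P], [Q] positive semidefinite of trace
   [tr M_c'' / η = 1/η] (the maps [V] and [U_k'] are isometries).  The
   acceptance probability of a circuit is linear in its input and lies in
   [[0, tr ρ]] for positive semidefinite [ρ], so the two acceptance
   probabilities are at most [1/η < ε] apart. *)

Set Implicit Arguments.
Unset Strict Implicit.
Unset Printing Implicit Defensive.
Import Order.TTheory GRing.Theory Num.Theory.
Local Open Scope ring_scope.

Section Bits.
Local Open Scope nat_scope.

Lemma bits_inj d x y : x < 2 ^ d -> y < 2 ^ d ->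
  (forall t, t < d -> odd (x %/ 2 ^ t) = odd (y %/ 2 ^ t)) -> x = y.
Proof.
elim: d x y => [|d IH] x y hx hy hxy.
  by move: hx hy; rewrite expn0 !ltnS !leqn0 => /eqP-> /eqP->.
have half_eq : x %/ 2 = y %/ 2.
  apply: IH; rewrite ?ltn_divLR -?expnSr // => t ht.
  by have := hxy t.+1 ht; rewrite expnS !divnMA.
have := hxy 0 (ltn0Sn d); rewrite expn0 !divn1 => odd_eq.
by rewrite (divn_eq x 2) (divn_eq y 2) !modn2 half_eq odd_eq.
Qed.

Lemma qbit_inj d (x y : 'I_(2 ^ d)) :
  (forall j : 'I_d, qbit x j = qbit y j) -> x = y.
Proof.
move=> hxy; apply/val_inj/(bits_inj (ltn_ord x) (ltn_ord y)) => t ht.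
have hj : d - t.+1 < d by lia.
have := hxy (Ordinal hj); rewrite /qbit /=.
by have -> : d - (d - t.+1).+1 = t by lia.
Qed.

Lemma qbit_surj d (f : 'I_d -> bool) :
  exists i : 'I_(2 ^ d), forall j, qbit i j = f j.
Proof.
pose g (i : 'I_(2 ^ d)) : {ffun 'I_d -> bool} := [ffun j => qbit i j].
have g_inj : injective g.
  by move=> x y /ffunP gxy; apply: qbit_inj => j; have := gxy j; rewrite !ffunE.
have := inj_card_onto g_inj _ [ffun j => f j].
rewrite card_ffun card_bool !card_ord leqnn => /(_ isT) /codomP [i gi].
by exists i => j; have /ffunP /(_ j) := gi; rewrite !ffunE.
Qed.

End Bits.

Lemma ler_dist_bounds (R : numDomainType) (x y t : R) :
  0 <= x <= t -> 0 <= y <= t -> `|x - y| <= t.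
Proof.
move=> /andP [x_ge0 x_le] /andP [y_ge0 y_le].
rewrite real_ler_norml ?rpredB ?ger0_real //; apply/andP; split.
  by apply: ler_wpDl x_ge0 _; rewrite lerN2.
by apply: le_trans x_le; rewrite gerBl.
Qed.

Section Quantum.
Variable R : realType.
Local Notation C := (R[i]).

Lemma adjmxM m n p (A : 'M[C]_(m, n)) (B : 'M[C]_(n, p)) :
  adjmx (A *m B) = adjmx B *m adjmx A.
Proof. by rewrite /adjmx trmx_mul map_mxM. Qed.

Lemma adjmxK m n (A : 'M[C]_(m, n)) : adjmx (adjmx A) = A.
Proof. exact: trmxCK. Qed.

Lemma adjmxB m n (A B : 'M[C]_(m, n)) : adjmx (A - B) = adjmx A - adjmx B.
Proof. by rewrite /adjmx linearB /= map_mxB. Qed.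

Lemma adjmxZ m n (c : C) (A : 'M[C]_(m, n)) : adjmx (c *: A) = c^* *: adjmx A.
Proof. by apply/matrixP => i j; rewrite !mxE rmorphM. Qed.

Lemma adjmx1 n : adjmx (1%:M : 'M[C]_n) = 1%:M.
Proof. by rewrite /adjmx trmx1 map_mx1. Qed.

Lemma adjmx_tens m n p q (A : 'M[C]_(m, n)) (B : 'M[C]_(p, q)) :
  adjmx (tensmx A B) = tensmx (adjmx A) (adjmx B).
Proof. by rewrite /adjmx trmx_tens map_mxT. Qed.

Lemma mxtrace_adj_conj m n (B : 'M[C]_(m, n)) (X : 'M[C]_n) :
  \tr (B *m X *m adjmx B) = \tr (adjmx B *m B *m X).
Proof. by rewrite mxtrace_mulC mulmxA. Qed.

Lemma psdmx_conj m n (A : 'M[C]_(m, n)) (X : 'M[C]_n) :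
  psdmx X -> psdmx (A *m X *m adjmx A).
Proof.
move=> [hX psdX]; split; first by rewrite /Defs.hermitian !adjmxM adjmxK hX mulmxA.
by move=> v; have := psdX (adjmx A *m v); rewrite adjmxM adjmxK !mulmxA.
Qed.

Lemma psdmx_scale n (c : C) (X : 'M[C]_n) : 0 <= c -> psdmx X -> psdmx (c *: X).
Proof.
move=> c_ge0 [hX psdX]; split; first by rewrite /Defs.hermitian adjmxZ geC0_conj ?hX.
by move=> v; rewrite -scalemxAr -scalemxAl mxE mulr_ge0.
Qed.

Lemma psdmx_trace_ge0 n (X : 'M[C]_n) : psdmx X -> 0 <= \tr X.
Proof.
move=> [_ psdX]; apply: sumr_ge0 => i _; have := psdX (delta_mx i 0).
have -> : adjmx (delta_mx i 0 : 'cV[C]_n) = delta_mx 0 i.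
  by apply/matrixP => a b; rewrite !mxE conjC_nat andbC.
by rewrite -rowE -colE !mxE.
Qed.

Lemma proj_psd_trace_bounds n (Q Z : 'M[C]_n) :
  adjmx Q = Q -> Q *m Q = Q -> psdmx Z -> 0 <= \tr (Q *m Z) <= \tr Z.
Proof.
have proj_trace_ge0 (P : 'M[C]_n) :
    adjmx P = P -> P *m P = P -> psdmx Z -> 0 <= \tr (P *m Z).
  move=> hP PP psdZ; have := psdmx_trace_ge0 (psdmx_conj P psdZ).
  by rewrite hP mxtrace_mulC mulmxA PP.
move=> hQ QQ psdZ; rewrite proj_trace_ge0 //= -subr_ge0.
rewrite -[X in \tr X - _]mul1mx -(raddfB (@mxtrace _ _)) -mulmxBl proj_trace_ge0 //.
  by rewrite adjmxB adjmx1 hQ.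
by rewrite mulmxBl mul1mx mulmxBr mulmx1 QQ subrr subr0.
Qed.

Definition anc_embed m a : 'M[C]_(m * 2 ^ a, m) :=
  \matrix_(k, j) (mxtens_unindex k == (j, anc0 a))%:R.

Lemma anc_embed_isometry m a : adjmx (anc_embed m a) *m anc_embed m a = 1%:M.
Proof.
apply/matrixP => i j; rewrite !mxE (bigD1 (mxtens_index (i, anc0 a))) //=.
rewrite big1 => [|k ki]; last first.
  rewrite !mxE conjC_nat; case: eqP => [ki0|]; last by rewrite mul0r.
  by rewrite -ki0 mxtens_unindexK eqxx in ki.
rewrite !mxE mxtens_indexK conjC_nat eqxx mul1r addr0 xpair_eqE eqxx andbT.
by rewrite eq_sym.
Qed.

Lemma tensmx_anc_state m a (rho : 'M[C]_m) :
  tensmx rho (anc_state R a) = anc_embed m a *m rho *m adjmx (anc_embed m a).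
Proof.
apply/matrixP => k l.
case: (mxtens_indexP k) => k1 k2; case: (mxtens_indexP l) => l1 l2.
rewrite tensmxE !mxE (bigD1 l1) //= big1 => [|j jl]; last first.
  by rewrite !mxE mxtens_indexK xpair_eqE conjC_nat eq_sym (negbTE jl) mulr0.
rewrite addr0 !mxE mxtens_indexK xpair_eqE eqxx conjC_nat /=.
rewrite (bigD1 k1) //= big1 => [|j jk]; last first.
  by rewrite !mxE mxtens_indexK xpair_eqE eq_sym (negbTE jk) mul0r.
rewrite addr0 !mxE mxtens_indexK xpair_eqE eqxx /=.
by case: (k2 == anc0 a); case: (l2 == anc0 a); rewrite /= ?mulr1 ?mul1r ?mulr0 ?mul0r.
Qed.

Definition accept_proj m a : 'M[C]_((m + m) * 2 ^ a) :=
  tensmx (proj1_first R m) 1%:M.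

Lemma accept_proj_hermitian m a : adjmx (accept_proj m a) = accept_proj m a.
Proof.
rewrite /accept_proj adjmx_tens adjmx1 /proj1_first /adjmx tr_block_mx.
by rewrite map_block_mx !trmx0 !map_mx0 trmx1 map_mx1.
Qed.

Lemma accept_proj_idem m a : accept_proj m a *m accept_proj m a = accept_proj m a.
Proof.
rewrite /accept_proj tensmx_mul mulmx1 /proj1_first mulmx_block.
by rewrite !mulmx0 !mul0mx !addr0 add0r mulmx1.
Qed.

Lemma accept_probE m a (U : 'M[C]_((m + m) * 2 ^ a)) (rho : 'M[C]_(m + m)) :
  let W := U *m anc_embed (m + m) a in
  accept_prob U rho =
  \tr (accept_proj m a *m (W *m rho *m adjmx W)).
Proof. by rewrite /accept_prob tensmx_anc_state adjmxM !mulmxA. Qed.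

Lemma accept_probB m a (U : 'M[C]_((m + m) * 2 ^ a)) (rho sigma : 'M[C]_(m + m)) :
  accept_prob U (rho - sigma) = accept_prob U rho - accept_prob U sigma.
Proof. by rewrite !accept_probE mulmxBr mulmxBl mulmxBr (raddfB (@mxtrace _ _)). Qed.

Lemma accept_prob_bounds m a (U : 'M[C]_((m + m) * 2 ^ a)) (rho : 'M[C]_(m + m)) :
  U \is unitarymx -> psdmx rho -> 0 <= accept_prob U rho <= \tr rho.
Proof.
move=> /unitarymxP /mulmx1C UU psd_rho; rewrite accept_probE.
set W := U *m _; have WW : adjmx W *m W = 1%:M.
  by rewrite adjmxM mulmxA -(mulmxA _ (adjmx U)) UU mulmx1 anc_embed_isometry.
have -> : \tr rho = \tr (W *m rho *m adjmx W) by rewrite mxtrace_adj_conj WW mul1mx.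
apply: proj_psd_trace_bounds (psdmx_conj W psd_rho).
  exact: accept_proj_hermitian.
exact: accept_proj_idem.
Qed.

Lemma accept_prob_dist_le m a (U : 'M[C]_((m + m) * 2 ^ a)) (P Q : 'M[C]_(m + m)) t :
  U \is unitarymx -> psdmx P -> psdmx Q -> \tr P <= t -> \tr Q <= t ->
  `|accept_prob U P - accept_prob U Q| <= t.
Proof.
move=> hU psdP psdQ trP trQ.
have /andP [P_ge0 P_le] := accept_prob_bounds hU psdP.
have /andP [Q_ge0 Q_le] := accept_prob_bounds hU psdQ.
by rewrite ler_dist_bounds // ?P_ge0 ?Q_ge0 ?(le_trans P_le) ?(le_trans Q_le).
Qed.

Lemma sign_conj_mul (n : nat) : ((-1) ^+ n : C)^* * (-1) ^+ n = 1.
Proof. by rewrite rmorph_sign -expr2 sqrr_sign. Qed.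

Lemma pauliU_col d (k : 'I_d -> bool * bool) (x x' : 'I_(2 ^ d)) :
  (forall j, qbit x' j = qbit x j (+) (k j).1) ->
  forall i, pauliU R k i x =
    (i == x')%:R * (-1) ^+ (\sum_(j < d) ((k j).2 && qbit x j : nat))%N.
Proof.
move=> hx' i; rewrite mxE.
have -> : [forall j, qbit i j == qbit x j (+) (k j).1] = (i == x').
  apply/forallP/eqP => [hi|-> j]; last by rewrite hx'.
  by apply: qbit_inj => j; rewrite hx'; apply/eqP/hi.
by case: (i == x'); rewrite ?mul1r ?mul0r.
Qed.

Lemma pauliU_isometry d (k : 'I_d -> bool * bool) :
  adjmx (pauliU R k) *m pauliU R k = 1%:M.
Proof.
apply/matrixP => x y; rewrite !mxE.
have [x' hx'] := qbit_surj (fun j => qbit x j (+) (k j).1).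
have [y' hy'] := qbit_surj (fun j => qbit y j (+) (k j).1).
have adjE i : adjmx (pauliU R k) x i = (pauliU R k i x)^* by rewrite !mxE.
under eq_bigr => i _ do rewrite adjE (pauliU_col hx') (pauliU_col hy').
rewrite (bigD1 x') //= [X in _ + X]big1 => [|i ix]; last first.
  by rewrite (negbTE ix) mul0r conjC0 mul0r.
have -> : (x' == y') = (x == y).
  apply/eqP/eqP => exy; last by apply: qbit_inj => j; rewrite hx' hy' exy.
  by apply: qbit_inj => j; apply: (@addIb (k j).1); rewrite -hx' -hy' exy.
rewrite eqxx mul1r addr0; case: eqP => [<-|_]; last by rewrite !mul0r mulr0.
by rewrite !mul1r sign_conj_mul.
Qed.

Lemma Vemb_isometry d1 d2 : (d2 <= d1)%N ->
  adjmx (Vemb R d1 d2) *m Vemb R d1 d2 = 1%:M.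
Proof.
move=> hd; apply/matrixP => j j'; rewrite !mxE.
have hlt : (j * 2 ^ (d1 - d2) < 2 ^ d1)%N.
  by rewrite -{2}(subnKC hd) expnD ltn_pmul2r ?expn_gt0.
rewrite (bigD1 (Ordinal hlt)) //= big1 => [|i hi]; last first.
  rewrite !mxE; case: eqP => [ij|]; last by rewrite conjC0 mul0r.
  by case/eqP: hi; apply: val_inj.
by rewrite !mxE /= eqxx conjC1 mul1r addr0 eqn_pmul2r ?expn_gt0.
Qed.

Lemma Mc''_psd d1 d2 (k' : 'I_d2 -> bool * bool) (Mc : 'M[C]_(2 ^ d2)) :
  density Mc -> psdmx (Mc'' d1 k' Mc).
Proof. by move=> [psdMc _]; apply/psdmx_conj/psdmx_conj. Qed.

Lemma Mc''_trace d1 d2 (k' : 'I_d2 -> bool * bool) (Mc : 'M[C]_(2 ^ d2)) :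
  (d2 <= d1)%N -> density Mc -> \tr (Mc'' d1 k' Mc) = 1.
Proof.
move=> hd [_ trMc]; rewrite /Mc'' !mxtrace_adj_conj.
by rewrite Vemb_isometry // mul1mx mxtrace_adj_conj pauliU_isometry mul1mx.
Qed.

Definition Lplus n : 'M[C]_(n + n, n) := col_mx 1%:M 1%:M.
Definition Lminus n : 'M[C]_(n + n, n) := col_mx 1%:M (- 1%:M).

Lemma adjmx_Lplus n : adjmx (Lplus n) = row_mx 1%:M 1%:M.
Proof. by rewrite /Lplus /adjmx tr_col_mx map_row_mx trmx1 map_mx1. Qed.

Lemma adjmx_Lminus n : adjmx (Lminus n) = row_mx 1%:M (- 1%:M).
Proof.
by rewrite /Lminus /adjmx tr_col_mx map_row_mx linearN /= map_mxN trmx1 map_mx1.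
Qed.

Lemma Lplus_gram n : adjmx (Lplus n) *m Lplus n = 2%:M.
Proof. by rewrite adjmx_Lplus mul_row_col !mulmx1 -raddfD. Qed.

Lemma Lminus_gram n : adjmx (Lminus n) *m Lminus n = 2%:M.
Proof.
by rewrite adjmx_Lminus mul_row_col mulmx1 mulNmx mulmxN mulmx1 opprK -raddfD.
Qed.

Lemma half_add (x : C) : 2^-1 * x + 2^-1 * x = x.
Proof. by rewrite -mulrDr -mulr2n -[x *+ 2]mulr_natl mulrA mulVf ?mul1r ?pnatr_eq0. Qed.

Lemma offdiag_split n (Y X : 'M[C]_n) :
  block_mx Y 0 0 Y - block_mx Y X X Y =
  Lminus n *m (2^-1 *: X) *m adjmx (Lminus n) -
  Lplus n *m (2^-1 *: X) *m adjmx (Lplus n).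
Proof.
rewrite adjmx_Lplus adjmx_Lminus /Lplus /Lminus !mul_col_mx !mul1mx !mulNmx.
rewrite !mul1mx !mul_mx_row !mulmx1 !mulmxN !mulmx1 opp_row_mx opprK -!block_mxEv.
rewrite !opp_block_mx !add_block_mx !subrr.
by congr block_mx; apply/matrixP => i j; rewrite !mxE add0r -opprD half_add.
Qed.

Lemma Mf_diff d1 (s : 'S_(2 ^ d1 + 2 ^ d1)) eta (Mop N : 'M[C]_(2 ^ d1)) :
  adjmx N = N ->
  let S := perm_mx s in let Xh := 2^-1 *: ((eta%:R)^-1 *: N) in
  Mf false s eta Mop N - Mf true s eta Mop N =
  (S *m Lminus _) *m Xh *m adjmx (S *m Lminus _) -
  (S *m Lplus _) *m Xh *m adjmx (S *m Lplus _).
Proof.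
move=> hN S Xh; rewrite /Mf /Ma /= hN -mulmxBl -mulmxBr offdiag_split.
by rewrite mulmxBr mulmxBl !adjmxM !mulmxA.
Qed.

Lemma perm_mx_isometry n (s : 'S_n) :
  adjmx (perm_mx s : 'M[C]_n) *m perm_mx s = 1%:M.
Proof.
by rewrite /adjmx -map_trmx map_perm_mx tr_perm_mx -perm_mxM mulVg perm_mx1.
Qed.

Lemma trace_half_conj m n (B : 'M[C]_(m, n)) (X : 'M[C]_n) :
  adjmx B *m B = 2%:M -> \tr (B *m (2^-1 *: X) *m adjmx B) = \tr X.
Proof.
move=> BB; rewrite mxtrace_adj_conj BB mul_scalar_mx scalerA.
by rewrite mulfV ?pnatr_eq0 ?scale1r.
Qed.

End Quantum.

Theorem theorem14 (R : realType) (d1 d2 : nat) :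
  (1 <= d2)%N -> (d2 <= d1)%N ->
  forall (Mo : 'M[R[i]]_(2 ^ d1)) (Mc : 'M[R[i]]_(2 ^ d2)),
  density Mo -> pdmx Mo -> density Mc ->
  forall (k : 'I_d1 -> bool * bool) (k' : 'I_d2 -> bool * bool)
         (s : 'S_(2 ^ d1 + 2 ^ d1)) (eta : nat) (eps : R),
  (0 < eta)%N -> 0 < eps ->
  (eta%:R)^-1 < eps ->
  (exists nrm lmin : R[i],
     is_opnorm (Mc'' d1 k' Mc *m invmx (Mo' k Mo) *m Mc'' d1 k' Mc) nrm /\
     is_lambda_min (Mo' k Mo) lmin /\
     ((eta%:R) ^+ 2)^-1 * nrm <= (4%:R)^-1 * lmin) ->
  forall (a : nat) (U : 'M[R[i]]_((2 ^ d1 + 2 ^ d1) * 2 ^ a)),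
  U \is unitarymx ->
  `| accept_prob U (Mf false s eta (Mo' k Mo) (Mc'' d1 k' Mc))
     - accept_prob U (Mf true s eta (Mo' k Mo) (Mc'' d1 k' Mc)) |
  < real_complex R eps.
Proof.
move=> _ hd Mo Mc _ _ dMc k k' s eta eps _ _ eta_lt_eps _ a U hU.
have psdN := Mc''_psd d1 k' dMc; have trN := Mc''_trace k' hd dMc.
have [hN _] := psdN.
have inv_nat_ge0 (n : nat) : 0 <= (n%:R)^-1 :> R[i] by rewrite invr_ge0 ler0n.
have psdXh := psdmx_scale (inv_nat_ge0 2) (psdmx_scale (inv_nat_ge0 eta) psdN).
rewrite -accept_probB Mf_diff // accept_probB.
apply: le_lt_trans (_ : (eta%:R)^-1 < _); last first.
  by rewrite -(rmorph_nat (real_complex R)) -fmorphV ltcR.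
have trace_eta L : adjmx L *m L = 2%:M ->
    \tr ((perm_mx s *m L) *m (2^-1 *: ((eta%:R)^-1 *: Mc'' d1 k' Mc))
         *m adjmx (perm_mx s *m L)) <= (eta%:R)^-1.
  move=> LL; rewrite trace_half_conj ?mxtraceZ ?trN ?mulr1 //.
  by rewrite adjmxM mulmxA -(mulmxA _ (adjmx _)) perm_mx_isometry mulmx1.
apply: accept_prob_dist_le hU (psdmx_conj _ psdXh) (psdmx_conj _ psdXh) _ _.
  exact: trace_eta (Lminus_gram _ _).
exact: trace_eta (Lplus_gram _ _).
Qed.
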